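(* Let $\mathbf T$ be a countably infinite homogeneous tournament and $\mathbf T^*$ an expansion of $\mathbf T$ as in the context. If $\mathrm{Age}(\mathbf T^* )$ has the expansion property relative to $\mathrm{Age}(\mathbf T)$, then $\mathrm{Age}(\mathbf T[I_\omega]^* )$ has the expansion property relative to $\mathrm{Age}(\mathbf T[I_\omega])$, where $\mathbf T[I_\omega]$ is the reduct of $\mathbf T[I_\omega]^*$ to $\{E\}$.
   Context: The age $\mathrm{Age}(\mathbf F)$ of a structure $\mathbf F$ is the class of finite structures embeddable in $\mathbf F$. Expansion property: let $L\subseteq L^*$ be relational languages, $\mathcal K$ a class of finite $L$-structures and $\mathcal K^*$ a class of finite $L^*$-structures whose $L$-reducts lie in $\mathcal K$. $\mathcal K^*$ has the expansion property relative to $\mathcal K$ if for every $\mathbf A\in\mathcal K$ there is $\mathbf B\in\mathcal K$ such that for all $\mathbf A^*,\mathbf B^*\in\mathcal K^*$ whose $L$-reducts are $\mathbf A$ and $\mathbf B$ respectively, $\mathbf A^*$ embeds into $\mathbf B^*$. A tournament is a directed graph in which every pair of distinct vertices carries exactly one directed edge; it is homogeneous if every isomorphism between finite substructures extends to an automorphism. $\mathbf T=(T,E^{\mathbf T})$ is a countable homogeneous tournament, and $\mathbf T^*$ is an expansion of $\mathbf T$ to a countable relational language $L_{\mathbf T^*}\supseteq\{E,<\}$ in which $<$ is interpreted as a linear order $<^*$ on $T$. Fix a linear order $\prec$ on $\mathbb N$ with $(\mathbb N,\prec)\cong(\mathbb Q,<)$. The structure $\mathbf T[I_\omega]^*$ has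 universe $T\times\mathbb N$ and language $L_{\mathbf T^*}$, interpreted as: $E((x,i),(y,j))$ iff $E^{\mathbf T}(x,y)$; for each $m$-ary $R\in L_{\mathbf T^*}\setminus\{E,<\}$, $R((x_1,i_1),\dots,(x_m,i_m))$ iff $R^{\mathbf T^*}(x_1,\dots,x_m)$; $(x,i)<(y,j)$ iff $x<^*y$, or $x=y$ and $i\prec j$. *)

(* finite structures have finType carriers; (Q,<) is mathcomp's rat. *)
From Stdlib Require List.
From HB Require Import structures.
From mathcomp Require Import all_boot all_order all_algebra.
Set Implicit Arguments. Unset Strict Implicit. Unset Printing Implicit Defensive.

Definition tournament (T : Type) (E : T -> T -> Prop) : Prop :=
  (forall x, ~ E x x) /\
  (forall x y, x <> y -> (E x y \/ E y x)) /\
  (forall x y, E x y -> ~ E y x).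

Definition automorphism (T : Type) (E : T -> T -> Prop) (g : T -> T) : Prop :=
  bijective g /\ forall x y, E x y <-> E (g x) (g y).

Definition homogeneous (T : Type) (E : T -> T -> Prop) : Prop :=
  forall (S : seq T) (f : T -> T),
    (forall x y, List.In x S -> List.In y S -> f x = f y -> x = y) ->
    (forall x y, List.In x S -> List.In y S -> (E x y <-> E (f x) (f y))) ->
    exists g, automorphism E g /\ forall x, List.In x S -> g x = f x.

Definition countably_infinite (T : Type) : Prop :=
  exists e : nat -> T, bijective e.

Definition countable_type (I : Type) : Prop :=
  exists c : I -> nat, injective c.

Definition strict_linear_order (T : Type) (lt : T -> T -> Prop) : Prop :=
  (forall x, ~ lt x x) /\
  (forall x y z, lt x y -> lt y z -> lt x z) /\
  (forall x y, x <> y -> lt x y \/ lt y x).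

(* Structures in the language L* = {E, <} ∪ I, where symbol i : I has arity ar i. *)
Record starStr (I : Type) (ar : I -> nat) (X : Type) := StarStr {
  sE : X -> X -> Prop;
  sLt : X -> X -> Prop;
  sR : forall i : I, ('I_(ar i) -> X) -> Prop
}.
Arguments sR {I ar X} s i _.

Definition embE (X Y : Type) (EX : X -> X -> Prop) (EY : Y -> Y -> Prop) (f : X -> Y) :=
  injective f /\ forall x y, EX x y <-> EY (f x) (f y).

Definition embStar (I : Type) (ar : I -> nat) (X Y : Type)
    (A : starStr ar X) (B : starStr ar Y) (f : X -> Y) :=
  injective f /\
  (forall x y, sE A x y <-> sE B (f x) (f y)) /\
  (forall x y, sLt A x y <-> sLt B (f x) (f y)) /\
  (forall i (t : 'I_(ar i) -> X), sR A i t <-> sR B i (fun k => f (t k))).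

(* Membership in the age (up to isomorphism: embeddable). *)
Definition inAgeE (X Y : Type) (EX : X -> X -> Prop) (EY : Y -> Y -> Prop) :=
  exists f : X -> Y, embE EX EY f.

Definition inAgeStar (I : Type) (ar : I -> nat) (X Y : Type)
    (A : starStr ar X) (F : starStr ar Y) :=
  exists f : X -> Y, embStar A F f.

Definition expansion_property (I : Type) (ar : I -> nat) (Y : Type) (F : starStr ar Y) :=
  forall (A : finType) (EA : A -> A -> Prop), inAgeE EA (sE F) ->
  exists (B : finType) (EB : B -> B -> Prop), inAgeE EB (sE F) /\
    forall (As : starStr ar A) (Bs : starStr ar B),
      sE As = EA -> sE Bs = EB ->
      inAgeStar As F -> inAgeStar Bs F ->
      exists h : A -> B, embStar As Bs h.

(* T[I_omega]^* on T × nat. *)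
Definition blowup (I : Type) (ar : I -> nat) (T : Type) (Ts : starStr ar T)
    (prec : nat -> nat -> Prop) : starStr ar (T * nat) :=
  @StarStr I ar (T * nat) (fun p q => sE Ts p.1 q.1)
    (fun p q => sLt Ts p.1 q.1 \/ (p.1 = q.1 /\ prec p.2 q.2))
    (fun i t => sR Ts i (fun k => (t k).1)).

From HB Require Import structures.
From mathcomp Require Import all_boot all_order all_algebra.
From Stdlib Require Import Classical FunctionalExtensionality.
Import Order.TTheory.

Set Implicit Arguments.
Unset Strict Implicit.
Unset Printing Implicit Defensive.

(* Let A be a finite structure in Age(T[I_omega]).  As T is a tournament, two
   points of A are non-adjacent exactly when they lie in the same copy of
   I_omega, so A collapses onto its quotient A0 by non-adjacency, which lies in
   Age(T).  The expansion property of T^* applied to A0 yields B0, and the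
   witness for A is B = B0 * {0, ..., #|A|}: every vertex of B0 is blown up into
   a column of #|A|+1 pairwise non-adjacent points.  Given expansions of A and B
   in the age of T[I_omega]^*, the expansions they induce on A0 and B0 lie in
   the age of T^*, so A0 embeds into B0 by some h0.  We lift h0 by sending a
   point of A into the column of its class, at the position whose rank in the
   column equals its rank in its class (both orders come from (Q,<) via prec). *)

Section Rank.
Variables (d : Order.disp_t) (R : orderType d) (X : finType).

Definition rank (P : pred X) (key : X -> R) (x : X) : nat :=
  #|[set y | P y && (key y < key x)%O]|.

Variables (P : pred X) (key : X -> R).

Lemma rank_lt x y : P x -> (key x < key y)%O -> rank P key x < rank P key y.
Proof.
move=> Px lt_xy; apply: proper_card; apply/properP; split.
  by apply/subsetP=> z; rewrite !inE => /andP[-> /lt_trans]; apply.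
by exists x; rewrite !inE ?Px ?lt_xy ?ltxx.
Qed.

Lemma rank_ltE x y : P x -> P y -> (key x < key y)%O = (rank P key x < rank P key y).
Proof.
move=> Px Py; case: (ltgtP (key x) (key y)) => [lt_xy|lt_yx|eq_key].
- by rewrite rank_lt.
- by apply/esym/negbTE; rewrite -leqNgt ltnW // rank_lt.
- by rewrite /rank eq_key ltnn.
Qed.

(* An element of [P] is not counted in its own rank. *)
Lemma rank_bound x : P x -> rank P key x < #|X|.
Proof.
move=> Px; rewrite -cardsT; apply: proper_card; apply/properP; split.
  by apply/subsetP=> y; rewrite inE.
by exists x; rewrite !inE ?ltxx ?andbF.
Qed.

End Rank.

Lemma rank_onto (d : Order.disp_t) (R : orderType d) (X : finType) (key : X -> R) :
  injective key -> forall k, k < #|X| -> exists x, rank predT key x = k.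
Proof.
move=> key_inj k lt_k; pose F x : 'I_#|X| := Ordinal (@rank_bound _ _ _ predT key x isT).
have F_inj : injective F.
  move=> x y /(congr1 val) /= e_rank; apply: key_inj.
  case: (ltgtP (key x) (key y)) => // [lt_xy|lt_yx].
  - by move: lt_xy; rewrite (rank_ltE (P := predT)) // e_rank ltnn.
  - by move: lt_yx; rewrite (rank_ltE (P := predT)) // e_rank ltnn.
have /codomP [x /(congr1 val) /= ->] := inj_card_onto F_inj (eq_leq (card_ord _)) (Ordinal lt_k).
by exists x.
Qed.

Section RankMatch.
Variables (d d' : Order.disp_t) (R : orderType d) (R' : orderType d').
Variables (X Y : finType) (y0 : Y) (P : pred X) (kx : X -> R) (ky : Y -> R').
Hypotheses (ky_inj : injective ky) (card_XY : #|X| <= #|Y|).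

Definition rank_match (x : X) : Y :=
  odflt y0 [pick y | rank predT ky y == rank P kx x].

Lemma rank_match_rank x : P x -> rank predT ky (rank_match x) = rank P kx x.
Proof.
move=> Px; rewrite /rank_match; case: pickP => [y /eqP //|no_y].
have [y e_rank] := rank_onto ky_inj (leq_trans (rank_bound kx Px) card_XY).
by have := no_y y; rewrite e_rank eqxx.
Qed.

Lemma rank_match_lt x x' : P x -> P x' ->
  (kx x < kx x')%O = (ky (rank_match x) < ky (rank_match x'))%O.
Proof.
move=> Px Px'.
by rewrite (rank_ltE kx Px Px') (rank_ltE (P := predT)) // !rank_match_rank.
Qed.

Lemma rank_match_inj : {in P &, injective kx} -> {in P &, injective rank_match}.
Proof.
move=> kx_inj x x' Px Px' e_match; apply: kx_inj => //.
case: (ltgtP (kx x) (kx x')) => // [lt_xx'|lt_x'x].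
- by move: lt_xx'; rewrite rank_match_lt // e_match ltxx.
- by move: lt_x'x; rewrite rank_match_lt // e_match ltxx.
Qed.

End RankMatch.

Section FibreRepresentatives.
Variables (A : finType) (K : eqType) (k : A -> K).

Definition fibre_rep (a : A) : A := odflt a [pick a' | k a' == k a].

Lemma fibre_rep_key a : k (fibre_rep a) = k a.
Proof. by rewrite /fibre_rep; case: pickP => [a' /eqP|]. Qed.

Lemma fibre_rep_eq a a' : fibre_rep a = fibre_rep a' <-> k a = k a'.
Proof.
split=> [e_rep|e_key]; first by rewrite -fibre_rep_key e_rep fibre_rep_key.
by rewrite /fibre_rep e_key; case: pickP => // no_rep; have := no_rep a'; rewrite eqxx.
Qed.

Definition fibre_reps : finType := {a : A | fibre_rep a == a}.

Definition to_rep (a : A) : fibre_reps :=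
  exist _ (fibre_rep a) (introT eqP (proj2 (fibre_rep_eq _ _) (fibre_rep_key a))).

Lemma to_repK : cancel val to_rep.
Proof. by move=> [a rep_a]; apply: val_inj; apply/eqP. Qed.

Lemma to_rep_eq a a' : to_rep a = to_rep a' <-> k a = k a'.
Proof.
rewrite -fibre_rep_eq; split=> [e_rep|e_rep]; last exact: val_inj.
exact: (congr1 val e_rep).
Qed.

End FibreRepresentatives.

Lemma tournament_same_image (T : Type) (ET : T -> T -> Prop) (X : Type)
    (E : X -> X -> Prop) (phi : X -> T) :
  tournament ET -> (forall x y, E x y <-> ET (phi x) (phi y)) ->
  forall a a', phi a = phi a' <-> ~ E a a' /\ ~ E a' a.
Proof.
move=> [ET_irr [ET_total _]] phiE a a'; split.
  by move=> e_phi; rewrite !phiE e_phi; split; apply: ET_irr.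
move=> [nE nE']; apply: NNPP => ne_phi.
by case: (ET_total _ _ ne_phi) => /phiE.
Qed.

Section Blowup.
Variables (T : Type) (ET : T -> T -> Prop) (I : Type) (ar : I -> nat).
Variables (ltT : T -> T -> Prop) (RT : forall i : I, ('I_(ar i) -> T) -> Prop).
Variables (prec : nat -> nat -> Prop) (hq : nat -> rat).
Hypotheses (ET_tour : tournament ET) (ltT_irr : forall x, ~ ltT x x).
Hypotheses (hq_inj : injective hq) (precE : forall i j, prec i j <-> (hq i < hq j)%R).

Local Notation TS := (@StarStr I ar T ET ltT RT).
Local Notation blowTS := (blowup TS prec).

Definition induced_star (X : Type) (E : X -> X -> Prop) (phi : X -> T) : starStr ar X :=
  @StarStr I ar X E (fun x y => ltT (phi x) (phi y)) (fun i t => @RT i (fun k => phi (t k))).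

Lemma induced_star_inAge (X : Type) (E : X -> X -> Prop) (phi : X -> T) :
  injective phi -> (forall x y, E x y <-> ET (phi x) (phi y)) ->
  inAgeStar (induced_star E phi) TS.
Proof. by move=> phi_inj phiE; exists phi; do !split=> //; apply: phiE. Qed.

Lemma blowup_lt_same (p p' : T * nat) : p.1 = p'.1 -> sLt blowTS p p' <-> prec p.2 p'.2.
Proof. by move=> e1 /=; rewrite e1; split=> [[/ltT_irr|[]]|] //; right. Qed.

Lemma blowup_lt_diff (p p' : T * nat) : p.1 <> p'.1 -> sLt blowTS p p' <-> ltT p.1 p'.1.
Proof. by move=> ne1 /=; split=> [[|[]]|] //; left. Qed.

(* The lifting construction.  [As] is an expansion of a finite [A] embedded in
   T[I_omega]^* by [al]; [q] collapses [A] onto its non-adjacency classes [A0],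
   with sections [s].  [Bs] is an expansion of [B0 * 'I_n] (with [n = #|A|+1])
   embedded by [be], whose edges only depend on the [B0]-coordinate. *)
Section Lift.
Variables (A : finType) (As : starStr ar A) (al : A -> T * nat).
Hypothesis alP : embStar As blowTS al.
Variables (A0 : finType) (q : A -> A0) (s : A0 -> A).
Hypotheses (qsK : cancel s q)
  (q_eq : forall a a', q a = q a' <-> ~ sE As a a' /\ ~ sE As a' a).

Lemma fstA_eq a a' : (al a).1 = (al a').1 <-> q a = q a'.
Proof.
rewrite q_eq; apply: (tournament_same_image (phi := fun x => (al x).1) ET_tour).
exact: alP.2.1.
Qed.

Lemma fstA_rep a : (al (s (q a))).1 = (al a).1.
Proof. by apply/fstA_eq; rewrite qsK. Qed.

Definition quotient_star : starStr ar A0 :=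
  induced_star (fun x y => sE As (s x) (s y)) (fun x => (al (s x)).1).

Lemma quotient_star_inAge : inAgeStar quotient_star TS.
Proof.
apply: induced_star_inAge => [x y /fstA_eq|x y]; last exact: alP.2.1.
by rewrite !qsK.
Qed.

Variables (B0 : finType) (EB0 : B0 -> B0 -> Prop) (g : B0 -> T).
Hypothesis gP : embE EB0 ET g.
Local Notation n := #|A|.+1.
Variables (Bs : starStr ar (B0 * 'I_n)) (be : B0 * 'I_n -> T * nat).
Hypotheses (beP : embStar Bs blowTS be) (BsE : sE Bs = fun p p' => EB0 p.1 p'.1).

Lemma EB0_irr b : ~ EB0 b b.
Proof. by move/gP.2; case: ET_tour => ET_irr _; apply: ET_irr. Qed.

Lemma fstB_col b j j' : (be (b, j)).1 = (be (b, j')).1.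
Proof.
apply/(tournament_same_image ET_tour beP.2.1); rewrite BsE.
by split; apply: EB0_irr.
Qed.

Definition fstB (b : B0) : T := (be (b, ord0)).1.

Lemma fstB_inj : injective fstB.
Proof.
move=> b b' /(tournament_same_image ET_tour beP.2.1); rewrite BsE => nonadj.
by apply: gP.1; apply/(tournament_same_image ET_tour gP.2).
Qed.

Definition column_star : starStr ar B0 := induced_star EB0 fstB.

Lemma column_star_inAge : inAgeStar column_star TS.
Proof.
apply: induced_star_inAge; first exact: fstB_inj.
by move=> b b'; have := beP.2.1 (b, ord0) (b', ord0); rewrite BsE.
Qed.

(* Keys ordering a copy of I_omega, and the lift of a map [h0 : A0 -> B0]:
   [a] goes to the column [h0 (q a)], at the position of the same rank as [a]
   in its class. *)
Definition keyA (a : A) : rat := hq (al a).2.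
Definition keyB (b : B0) (j : 'I_n) : rat := hq (be (b, j)).2.
Definition fibre (a : A) : pred A := [pred a' | q a' == q a].

Definition lift (h0 : A0 -> B0) (a : A) : B0 * 'I_n :=
  (h0 (q a), rank_match ord0 (fibre a) keyA (keyB (h0 (q a))) a).

Lemma keyB_inj b : injective (keyB b).
Proof.
move=> j j' /hq_inj e2.
by case: (beP.1 _ _ (injective_projections _ _ (fstB_col b j j') e2)).
Qed.

Section LiftEmbedding.
Variable h0 : A0 -> B0.
Hypothesis h0P : embStar quotient_star column_star h0.

(* A column has room for any class of [A]. *)
Lemma card_A_le_n : #|A| <= #|'I_n|.
Proof. by rewrite card_ord. Qed.

Lemma keyA_inj_fibre a : {in fibre a &, injective keyA}.
Proof.
move=> x y; rewrite !inE => /eqP qx /eqP qy /hq_inj e2.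
by apply: alP.1; apply: injective_projections e2; apply/fstA_eq; rewrite qx qy.
Qed.

Lemma lift_fst a : (be (lift h0 a)).1 = fstB (h0 (q a)).
Proof. exact: fstB_col. Qed.

Lemma lift_key_lt a a' : q a = q a' ->
  (keyA a < keyA a')%R =
  (keyB (lift h0 a).1 (lift h0 a).2 < keyB (lift h0 a').1 (lift h0 a').2)%R.
Proof.
move=> e_q; have e_fibre : fibre a' = fibre a by rewrite /fibre e_q.
rewrite /lift -e_q e_fibre.
apply: rank_match_lt; [exact: keyB_inj | exact: card_A_le_n | |].
- by rewrite /fibre inE.
- by rewrite /fibre inE e_q.
Qed.

Lemma lift_inj : injective (lift h0).
Proof.
move=> a a' e_lift; have e_q : q a = q a' by apply: h0P.1; case: e_lift.
have e_fibre : fibre a' = fibre a by rewrite /fibre e_q.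
move: e_lift; rewrite /lift -e_q e_fibre => -[] /(rank_match_inj (@keyB_inj _) card_A_le_n).
by apply; rewrite ?inE ?e_q //; apply: keyA_inj_fibre.
Qed.

Lemma lift_E a a' : sE As a a' <-> sE Bs (lift h0 a) (lift h0 a').
Proof.
apply: (iff_trans (alP.2.1 a a')); rewrite BsE /= -(fstA_rep a) -(fstA_rep a').
exact: (iff_trans (iff_sym (alP.2.1 _ _)) (h0P.2.1 (q a) (q a'))).
Qed.

Lemma lift_lt a a' : sLt As a a' <-> sLt Bs (lift h0 a) (lift h0 a').
Proof.
rewrite (alP.2.2.1 a a') (beP.2.2.1 (lift h0 a)).
case: (eqVneq (q a) (q a')) => [e_q|ne_q].
  rewrite (blowup_lt_same (proj2 (fstA_eq a a') e_q)).
  rewrite blowup_lt_same ?lift_fst ?e_q //.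
  by rewrite !precE -/(keyA a) -/(keyA a') (lift_key_lt e_q).
have ne_A : (al a).1 <> (al a').1.
  by move=> /(proj1 (fstA_eq _ _)) /eqP; rewrite (negbTE ne_q).
have ne_B : (be (lift h0 a)).1 <> (be (lift h0 a')).1.
  by rewrite !lift_fst => /fstB_inj /h0P.1 /eqP; rewrite (negbTE ne_q).
rewrite (blowup_lt_diff ne_A) (blowup_lt_diff ne_B) !lift_fst.
by rewrite -(fstA_rep a) -(fstA_rep a'); apply: h0P.2.2.1.
Qed.

Lemma lift_R i (t : 'I_(ar i) -> A) :
  sR As i t <-> sR Bs i (fun k => lift h0 (t k)).
Proof.
rewrite (alP.2.2.2 i t) (beP.2.2.2 i) /=.
have -> : (fun k => (al (t k)).1) = (fun k => (al (s (q (t k)))).1).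
  by apply: functional_extensionality => k; rewrite fstA_rep.
have -> : (fun k => (be (lift h0 (t k))).1) = (fun k => fstB (h0 (q (t k)))).
  by apply: functional_extensionality => k; rewrite lift_fst.
exact: h0P.2.2.2 i (fun k => q (t k)).
Qed.

Lemma lift_embedding : embStar As Bs (lift h0).
Proof.
split; first exact: lift_inj.
by split; [exact: lift_E | split; [exact: lift_lt | exact: lift_R]].
Qed.

End LiftEmbedding.
End Lift.
End Blowup.

Theorem mainTheorem4 (T : Type) (ET : T -> T -> Prop)
  (I : Type) (ar : I -> nat) (ltT : T -> T -> Prop)
  (RT : forall i : I, ('I_(ar i) -> T) -> Prop)
  (prec : nat -> nat -> Prop) :
  countably_infinite T ->
  tournament ET ->
  homogeneous ET ->
  countable_type I ->
  strict_linear_order ltT ->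
  (exists h : nat -> rat, bijective h /\ forall i j, prec i j <-> (h i < h j)%R) ->
  expansion_property (@StarStr I ar T ET ltT RT) ->
  expansion_property (blowup (@StarStr I ar T ET ltT RT) prec).
Proof.
move=> [enumT [code _ codeK]] ET_tour _ _ [ltT_irr _] [hq [[hq_inv hqK _] precE]] EP A EA [f fP].
(* The non-adjacency classes of [A] are the fibres of its T-coordinate. *)
pose key (a : A) := code (f a).1.
have q_eq a a' : to_rep key a = to_rep key a' <-> ~ EA a a' /\ ~ EA a' a.
  rewrite to_rep_eq -(tournament_same_image (phi := fun a => (f a).1) ET_tour fP.2).
  by rewrite /key; split=> [/(can_inj codeK)|->].
pose EA0 (x y : fibre_reps key) := EA (val x) (val y).
have A0_age : inAgeE EA0 ET.
  exists (fun x => (f (val x)).1); split; last by move=> x y; apply: fP.2.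
  by move=> x y e1; rewrite -[x]to_repK -[y]to_repK; apply/to_rep_eq; rewrite /key e1.
(* The witness: the witness [B0] for the quotient, each vertex blown up #|A|+1 times. *)
have [B0 [EB0 [[g gP] EP0]]] := EP _ EA0 A0_age.
exists (B0 * 'I_#|A|.+1)%type, (fun p p' => EB0 p.1 p'.1); split.
  exists (fun p => (g p.1, val p.2)); split; last by move=> p p'; apply: gP.2.
  by move=> [b j] [b' j'] [/gP.1 -> /val_inj ->].
move=> As Bs AsE BsE [al alP] [be beP]; subst EA.
have [h0 h0P] := EP0 (quotient_star ltT RT As al val) (column_star ltT RT EB0 be) erefl erefl
  (quotient_star_inAge ET_tour alP (@to_repK _ _ key) q_eq) (column_star_inAge ET_tour gP beP BsE).
eexists; exact: (lift_embedding ET_tour ltT_irr (can_inj hqK) precE alP (@to_repK _ _ key) q_eq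
  gP beP BsE h0P).
Qed.
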